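(* Let $L>0$, $\mu\in(-\infty,0]$, $\kappa:=\mu/L$, $N\ge1$, $h_0,\dots,h_{N-1}\in(0,1]$ and $\Delta>0$, and set $p(h,\kappa)=2h-h^2\frac{-\kappa}{1-\kappa}$. Consider the gradient method $x_{i+1}=x_i-\frac{h_i}{L}\nabla f(x_i)$, $i=0,\dots,N-1$. Then: (i) there exist $f\in\mathcal{F}_{\mu,L}(\mathbb{R})$ and $x_0\in\mathbb{R}$ such that $f(x_0)-f(x_N)=\Delta$ and $\min_{0\le i\le N}|f'(x_i)|^2=\frac{2L\Delta}{\sum_{i=0}^{N-1}p(h_i,\kappa)}$; (ii) there exist $f\in\mathcal{F}_{\mu,L}(\mathbb{R})$ with global minimum value $f_*$ and $x_0\in\mathbb{R}$ such that $f(x_0)-f_*=\Delta$ and $\min_{0\le i\le N}|f'(x_i)|^2=\frac{2L\Delta}{1+\sum_{i=0}^{N-1}p(h_i,\kappa)}$. That is, for step sizes in $(0,1]$ the upper bounds $\min_{0\le i\le N}\|\nabla f(x_i)\|^2\le\frac{2L[f(x_0)-f(x_N)]}{\sum_i p(h_i,\kappa)}$ and $\min_{0\le i\le N}\|\nabla f(x_i)\|^2\le\frac{2L[f(x_0)-f_*]}{1+\sum_i p(h_i,\kappa)}$, valid for all $f\in\mathcal{F}_{\mu,L}$, are attained.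
   Context: For $L>0$ and $\mu\le L$, $\mathcal{F}_{\mu,L}(\mathbb{R}^d)$ denotes the class of differentiable functions $f:\mathbb{R}^d\to\mathbb{R}$ such that both $\frac L2\|\cdot\|^2-f$ and $f-\frac{\mu}{2}\|\cdot\|^2$ are convex. *)

From Stdlib Require Import Reals.
From Coquelicot Require Import Coquelicot.
Open Scope R_scope.

Definition convex_fun (g : R -> R) : Prop :=
  forall x y t, 0 <= t <= 1 ->
    g (t * x + (1 - t) * y) <= t * g x + (1 - t) * g y.

Definition F_class (mu L : R) (f : R -> R) : Prop :=
  (forall x, ex_derive f x) /\
  convex_fun (fun x => L / 2 * x ^ 2 - f x) /\
  convex_fun (fun x => f x - mu / 2 * x ^ 2).

Fixpoint gd_iter (f : R -> R) (L : R) (h : nat -> R) (x0 : R) (i : nat) : R :=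
  match i with
  | O => x0
  | S j => gd_iter f L h x0 j - h j / L * Derive f (gd_iter f L h x0 j)
  end.

Fixpoint min_upto (g : nat -> R) (n : nat) : R :=
  match n with
  | O => g O
  | S m => Rmin (min_upto g m) (g (S m))
  end.

Fixpoint sum_lt (g : nat -> R) (n : nat) : R :=
  match n with
  | O => 0
  | S m => sum_lt g m + g m
  end.

Definition pfun (h kappa : R) : R := 2 * h - h ^ 2 * (- kappa / (1 - kappa)).

(* The extremal functions are built from their derivative.  For a level [g > 0] put nodes
   [x_0 = 0], [x_(i+1) = x_i + h_i g / L], and let [f'] equal [-g] at every node while on
   [[x_i, x_(i+1)]] it rises with slope [L] and falls back with slope [mu] (a "tooth").  The
   slopes of [f'] lie in [[mu, L]], so [f] is in [F_(mu,L)], and gradient descent from [x_0]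
   visits exactly the nodes, seeing [|f'(x_i)| = g] each time.  The area of a tooth gives
   [f(x_i) - f(x_(i+1)) = g^2 p(h_i, kappa) / (2L)], and [g^2 = 2 L Delta / sum_i p(h_i, kappa)]
   yields (i).  For (ii), after [x_N] the derivative ramps up from [-g] to [0] with slope [L]
   and stays [0]: this adds [g^2 / (2L)] to the decrease and makes the top of the ramp a global
   minimiser, since [h_i <= 1] keeps every tooth, hence [f'], below [0] before it. *)

From Stdlib Require Import Reals Lra Lia.
From Coquelicot Require Import Coquelicot.
Open Scope R_scope.

Fixpoint max_lt (F : nat -> R) (n : nat) : R :=
  match n with
  | O => 0
  | S m => Rmax (max_lt F m) (F m)
  end.

Lemma max_lt_ge0 F n : 0 <= max_lt F n.
Proof. induction n as [|n IH]; simpl; [lra | apply (Rle_trans _ _ _ IH), Rmax_l]. Qed.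

Lemma le_max_lt F n i : (i < n)%nat -> F i <= max_lt F n.
Proof.
  induction n as [|n IH]; intros Hi; [lia|]; simpl.
  destruct (Nat.eq_dec i n) as [->|Hne]; [apply Rmax_r|].
  apply (Rle_trans _ _ _ (IH ltac:(lia))), Rmax_l.
Qed.

Lemma max_lt_le F n v :
  0 <= v -> (forall i, (i < n)%nat -> F i <= v) -> max_lt F n <= v.
Proof.
  intros Hv HF; induction n as [|n IH]; simpl; [lra|].
  apply Rmax_lub; [apply IH; intros; apply HF|apply HF]; lia.
Qed.

Lemma sum_lt_le_mono (F : nat -> R) j k :
  (forall i, (j <= i < k)%nat -> 0 <= F i) -> (j <= k)%nat -> sum_lt F j <= sum_lt F k.
Proof.
  intros HF Hjk; induction k as [|k IH].
  - replace j with 0%nat by lia; lra.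
  - destruct (Nat.eq_dec j (S k)) as [->|Hne]; [lra|]; simpl.
    assert (sum_lt F j <= sum_lt F k) by (apply IH; [intros; apply HF|]; lia).
    assert (0 <= F k) by (apply HF; lia); lra.
Qed.

Lemma sum_lt_pos (F : nat -> R) n :
  (1 <= n)%nat -> (forall i, (i < n)%nat -> 0 < F i) -> 0 < sum_lt F n.
Proof.
  intros Hn HF.
  apply Rlt_le_trans with (sum_lt F 1); [simpl; specialize (HF 0%nat Hn); lra|].
  apply sum_lt_le_mono; [intros i Hi; left; apply HF|]; lia.
Qed.

Lemma min_upto_const (F : nat -> R) c n : (forall i, (i <= n)%nat -> F i = c) -> min_upto F n = c.
Proof.
  intros HF; induction n as [|n IH]; simpl; [apply HF; lia|].
  rewrite IH, HF; [apply Rmin_left; lra | lia | intros; apply HF; lia].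
Qed.

Definition slope_bounded (mu L : R) (phi : R -> R) : Prop :=
  forall x y, x <= y -> mu * (y - x) <= phi y - phi x <= L * (y - x).

Section SlopeBounded.

Variables mu L : R.

Lemma slope_bounded_affine s c :
  mu <= s <= L -> slope_bounded mu L (fun x => s * (x - c)).
Proof. intros Hs x y Hxy; split; nra. Qed.

Lemma slope_bounded_const c : mu <= 0 <= L -> slope_bounded mu L (fun _ => c).
Proof. intros Hs x y Hxy; split; nra. Qed.

Lemma slope_bounded_addl c phi :
  slope_bounded mu L phi -> slope_bounded mu L (fun x => c + phi x).
Proof. intros Hphi x y Hxy; specialize (Hphi x y Hxy); lra. Qed.

Lemma slope_bounded_max phi psi : slope_bounded mu L phi -> slope_bounded mu L psi ->
  slope_bounded mu L (fun x => Rmax (phi x) (psi x)).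
Proof.
  intros Hphi Hpsi x y Hxy; specialize (Hphi x y Hxy); specialize (Hpsi x y Hxy).
  unfold Rmax; repeat destruct Rle_dec; lra.
Qed.

Lemma slope_bounded_min phi psi : slope_bounded mu L phi -> slope_bounded mu L psi ->
  slope_bounded mu L (fun x => Rmin (phi x) (psi x)).
Proof.
  intros Hphi Hpsi x y Hxy; specialize (Hphi x y Hxy); specialize (Hpsi x y Hxy).
  unfold Rmin; repeat destruct Rle_dec; lra.
Qed.

Lemma slope_bounded_max_lt (F : nat -> R -> R) n :
  mu <= 0 <= L -> (forall i, slope_bounded mu L (F i)) ->
  slope_bounded mu L (fun x => max_lt (fun i => F i x) n).
Proof.
  intros H0 HF; induction n as [|n IH]; simpl.
  - now apply slope_bounded_const.
  - now apply slope_bounded_max.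
Qed.

Lemma slope_bounded_lipschitz phi x y : mu <= 0 <= L -> slope_bounded mu L phi ->
  Rabs (phi y - phi x) <= (L - mu) * Rabs (y - x).
Proof.
  intros H0 Hphi; destruct (Rle_dec x y) as [Hxy|Hxy].
  - specialize (Hphi x y Hxy); rewrite (Rabs_pos_eq (y - x)) by lra.
    apply Rabs_le; nra.
  - specialize (Hphi y x ltac:(lra)); rewrite (Rabs_left1 (y - x)) by lra.
    apply Rabs_le; nra.
Qed.

Lemma slope_bounded_continuous phi x : mu <= 0 <= L -> slope_bounded mu L phi ->
  continuous phi x.
Proof.
  intros H0 Hphi; apply continuity_pt_filterlim; intros eps Heps.
  exists (eps / (L - mu + 1)); split; [apply Rdiv_lt_0_compat; lra|].
  intros y [_ Hy]; simpl in *; unfold R_dist in *.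
  pose proof (slope_bounded_lipschitz phi x y H0 Hphi).
  pose proof (Rabs_pos (y - x)).
  apply (Rmult_lt_compat_r (L - mu + 1)) in Hy; [|lra].
  unfold Rdiv in Hy; rewrite Rmult_assoc, Rinv_l in Hy by lra.
  nra.
Qed.

End SlopeBounded.

Lemma mean_value (f f' : R -> R) a b : (forall x, is_derive f x (f' x)) -> a <= b ->
  exists c, a <= c <= b /\ f b - f a = f' c * (b - a).
Proof.
  intros Hf Hab; destruct (MVT_gen f a b f') as [c [Hc E]].
  - intros; apply Hf.
  - intros; apply continuity_pt_filterlim, (ex_derive_continuous (V:=R_NormedModule)).
    eexists; apply Hf.
  - exists c; rewrite Rmin_left, Rmax_right in Hc by lra; auto.
Qed.

Lemma increment_of_affine_derive (f f' : R -> R) a b u s c :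
  (forall x, is_derive f x (f' x)) -> a <= b ->
  (forall x, a <= x <= b -> f' x = u + s * (x - c)) ->
  f b - f a = u * (b - a) + s * ((b - c) ^ 2 - (a - c) ^ 2) / 2.
Proof.
  intros Hf Hab Hf'.
  set (Q x := u * x + s * (x - c) ^ 2 / 2).
  assert (HQ : forall x, is_derive Q x (u + s * (x - c)))
    by (intros x; unfold Q; auto_derive; auto; field).
  destruct (mean_value (fun x => f x - Q x) (fun x => f' x - (u + s * (x - c))) a b)
    as [x [Hx E]]; [intros; apply (is_derive_minus f Q); auto | exact Hab |].
  rewrite Hf' in E by exact Hx; unfold Q in E; lra.
Qed.

Lemma derive_sign_global_min (f f' : R -> R) a : (forall x, is_derive f x (f' x)) ->
  (forall x, x <= a -> f' x <= 0) -> (forall x, a <= x -> 0 <= f' x) ->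
  forall y, f a <= f y.
Proof.
  intros Hf Hleft Hright y; destruct (Rle_dec y a) as [Hy|Hy].
  - destruct (mean_value f f' y a Hf Hy) as [c [Hc E]].
    specialize (Hleft c ltac:(lra)); nra.
  - destruct (mean_value f f' a y Hf ltac:(lra)) as [c [Hc E]].
    specialize (Hright c ltac:(lra)); nra.
Qed.

Lemma convex_ineq_of_nondecreasing_derive (G G' : R -> R) x y t :
  (forall x, is_derive G x (G' x)) -> (forall x y, x <= y -> G' x <= G' y) ->
  x <= y -> 0 <= t <= 1 -> G (t * x + (1 - t) * y) <= t * G x + (1 - t) * G y.
Proof.
  intros HG HG' Hxy Ht; set (z := t * x + (1 - t) * y).
  assert (Hz : x <= z <= y) by (unfold z; nra).
  destruct (mean_value G G' x z HG) as [c1 [Hc1 E1]]; [lra|].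
  destruct (mean_value G G' z y HG) as [c2 [Hc2 E2]]; [lra|].
  assert (Hc12 : G' c1 <= G' c2) by (apply HG'; lra).
  assert (Hzx : z - x = (1 - t) * (y - x)) by (unfold z; ring).
  assert (Hyz : y - z = t * (y - x)) by (unfold z; ring).
  assert (0 <= t * (1 - t) * (y - x) * (G' c2 - G' c1))
    by (apply Rmult_le_pos; [apply Rmult_le_pos|]; nra).
  nra.
Qed.

Lemma convex_of_nondecreasing_derive (G G' : R -> R) :
  (forall x, is_derive G x (G' x)) -> (forall x y, x <= y -> G' x <= G' y) ->
  convex_fun G.
Proof.
  intros HG HG' x y t Ht; destruct (Rle_dec x y) as [Hxy|Hxy].
  - exact (convex_ineq_of_nondecreasing_derive G G' x y t HG HG' Hxy Ht).
  - replace (t * x + (1 - t) * y) with ((1 - t) * y + (1 - (1 - t)) * x) by ring.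
    replace (t * G x + (1 - t) * G y) with ((1 - t) * G y + (1 - (1 - t)) * G x) by ring.
    apply (convex_ineq_of_nondecreasing_derive G G'); auto; lra.
Qed.

Lemma F_class_of_slope_bounded_derive mu L (f phi : R -> R) :
  (forall x, is_derive f x (phi x)) -> slope_bounded mu L phi -> F_class mu L f.
Proof.
  intros Hf Hphi; split; [|split].
  - intros x; eexists; apply Hf.
  - apply (convex_of_nondecreasing_derive _ (fun x => L * x - phi x)).
    + intros x; apply (is_derive_minus (fun x => L / 2 * x ^ 2) f); [|apply Hf].
      auto_derive; auto; field.
    + intros x y Hxy; specialize (Hphi x y Hxy); lra.
  - apply (convex_of_nondecreasing_derive _ (fun x => phi x - mu * x)).
    + intros x; apply (is_derive_minus f (fun x => mu / 2 * x ^ 2)); [apply Hf|].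
      auto_derive; auto; field.
    + intros x y Hxy; specialize (Hphi x y Hxy); lra.
Qed.

Lemma is_derive_RInt0 (phi : R -> R) x :
  (forall z, continuous phi z) -> is_derive (fun t => RInt phi 0 t) x (phi x).
Proof.
  intros Hc; apply (is_derive_RInt phi _ 0); [|apply Hc].
  apply filter_forall; intros b.
  apply (RInt_correct (V:=R_CompleteNormedModule)), ex_RInt_continuous.
  intros; apply Hc.
Qed.

Section Tooth.

Variables L mu : R.
Hypotheses (HL : 0 < L) (Hmu : mu <= 0).

Definition tooth (p d x : R) : R := Rmax 0 (Rmin (L * (x - p)) (mu * (x - (p + d)))).

Lemma slope_bounded_tooth p d : slope_bounded mu L (tooth p d).
Proof.
  apply slope_bounded_max; [apply slope_bounded_const; lra|].
  apply slope_bounded_min; apply slope_bounded_affine; lra.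
Qed.

Lemma tooth_ge0 p d x : 0 <= tooth p d x.
Proof. apply Rmax_l. Qed.

Lemma tooth_out p d x : x <= p \/ p + d <= x -> tooth p d x = 0.
Proof. intros Hx; unfold tooth, Rmin, Rmax; repeat destruct Rle_dec; nra. Qed.

Lemma tooth_le p d x : 0 <= d -> tooth p d x <= L * d.
Proof. intros Hd; unfold tooth, Rmin, Rmax; repeat destruct Rle_dec; nra. Qed.

(* With [kappa = mu / L], [c = -kappa / (1 - kappa)]: the tooth rises with slope [L] on the
   first fraction [c] of its base and falls back with slope [mu] on the rest. *)
Let c := - mu / (L - mu).

Lemma pfun_eq hh : pfun hh (mu / L) = 2 * hh - hh ^ 2 * c.
Proof. unfold pfun, c; field; lra. Qed.

Lemma rise_fraction_bounds : 0 <= c < 1.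
Proof.
  unfold c; split; [apply Rdiv_le_0_compat; lra|].
  apply Rmult_lt_reg_r with (L - mu); [lra|]; unfold Rdiv.
  rewrite Rmult_assoc, Rinv_l; lra.
Qed.

Lemma tooth_lines_gap p d x :
  L * (x - p) - mu * (x - (p + d)) = (L - mu) * (x - (p + c * d)).
Proof. unfold c; field; lra. Qed.

Lemma tooth_rise p d x : p <= x <= p + c * d -> tooth p d x = L * (x - p).
Proof.
  intros Hx; pose proof (tooth_lines_gap p d x).
  assert ((L - mu) * (x - (p + c * d)) <= 0) by nra.
  unfold tooth, Rmin, Rmax; repeat destruct Rle_dec; nra.
Qed.

Lemma tooth_fall p d x : p + c * d <= x <= p + d -> tooth p d x = mu * (x - (p + d)).
Proof.
  intros Hx; pose proof (tooth_lines_gap p d x).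
  assert (0 <= (L - mu) * (x - (p + c * d))) by nra.
  unfold tooth, Rmin, Rmax; repeat destruct Rle_dec; nra.
Qed.

(* The area of the tooth is that of a triangle of base [d] and height [L c d]. *)
Lemma increment_on_tooth (f f' : R -> R) p d a :
  (forall x, is_derive f x (f' x)) -> 0 <= d ->
  (forall x, p <= x <= p + d -> f' x = a + tooth p d x) ->
  f (p + d) - f p = a * d + L * c * d ^ 2 / 2.
Proof.
  intros Hf Hd Hf'; pose proof rise_fraction_bounds as Hc.
  assert (Hcd : 0 <= c * d <= d) by nra.
  replace (f (p + d) - f p) with ((f (p + d) - f (p + c * d)) + (f (p + c * d) - f p)) by ring.
  rewrite (increment_of_affine_derive f f' (p + c * d) (p + d) a mu (p + d)),
          (increment_of_affine_derive f f' p (p + c * d) a L p); auto; try lra.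
  - unfold c; field; lra.
  - intros x Hx; rewrite Hf', tooth_rise; lra.
  - intros x Hx; rewrite Hf', tooth_fall; lra.
Qed.

End Tooth.

Section Ramp.

Variables L g p : R.
Hypotheses (HL : 0 < L) (Hg : 0 < g).

Definition ramp (x : R) : R := Rmin g (Rmax 0 (L * (x - p))).

Lemma slope_bounded_ramp mu : mu <= 0 -> slope_bounded mu L ramp.
Proof.
  intros Hmu; apply slope_bounded_min; [apply slope_bounded_const; lra|].
  apply slope_bounded_max; [apply slope_bounded_const | apply slope_bounded_affine]; lra.
Qed.

Lemma ramp_bounds x : 0 <= ramp x <= g.
Proof. unfold ramp, Rmin, Rmax; repeat destruct Rle_dec; lra. Qed.

Lemma ramp_left x : x <= p -> ramp x = 0.
Proof. intros Hx; unfold ramp, Rmin, Rmax; repeat destruct Rle_dec; nra. Qed.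

Lemma ramp_rise x : p <= x <= p + g / L -> ramp x = L * (x - p).
Proof.
  intros Hx; assert (L * (x - p) <= g).
  { replace g with (L * (p + g / L - p)) by (field; lra); nra. }
  unfold ramp, Rmin, Rmax; repeat destruct Rle_dec; nra.
Qed.

Lemma ramp_top x : p + g / L <= x -> ramp x = g.
Proof.
  intros Hx; assert (g <= L * (x - p)).
  { replace g with (L * (p + g / L - p)) at 1 by (field; lra); nra. }
  unfold ramp, Rmin, Rmax; repeat destruct Rle_dec; nra.
Qed.

End Ramp.

Section Profile.

Variables (L mu g : R) (h : nat -> R) (N : nat) (tail : R -> R).
Hypotheses (HL : 0 < L) (Hmu : mu <= 0) (Hg : 0 < g)
  (Hh : forall i, (i < N)%nat -> 0 < h i <= 1).

Definition step (i : nat) : R := h i * g / L.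

Definition node (i : nat) : R := sum_lt step i.

Definition profile (x : R) : R :=
  - g + Rmax (max_lt (fun i => tooth L mu (node i) (step i) x) N) (tail x).

Hypotheses (Htail : slope_bounded mu L tail) (Htail_ge0 : forall x, 0 <= tail x)
  (Htail_left : forall x, x <= node N -> tail x = 0).

Lemma node_S i : node (S i) = node i + step i.
Proof. reflexivity. Qed.

Lemma step_pos i : (i < N)%nat -> 0 < step i.
Proof. intros Hi; specialize (Hh i Hi); apply Rdiv_lt_0_compat; nra. Qed.

Lemma node_le j k : (j <= k <= N)%nat -> node j <= node k.
Proof.
  intros Hjk; apply sum_lt_le_mono; [|lia].
  intros i Hi; left; apply step_pos; lia.
Qed.

Lemma slope_bounded_profile : slope_bounded mu L profile.
Proof.
  apply slope_bounded_addl, slope_bounded_max; [|exact Htail].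
  apply slope_bounded_max_lt; [lra|]; intros i; apply slope_bounded_tooth; lra.
Qed.

Lemma teeth_right x : node N <= x -> max_lt (fun i => tooth L mu (node i) (step i) x) N = 0.
Proof.
  intros Hx; apply Rle_antisym; [|apply max_lt_ge0].
  apply max_lt_le; [lra|]; intros i Hi.
  rewrite (tooth_out L mu HL Hmu); [lra|]; right.
  pose proof (node_le (S i) N ltac:(lia)); rewrite node_S in *; lra.
Qed.

Lemma profile_right x : node N <= x -> profile x = - g + tail x.
Proof.
  intros Hx; unfold profile; rewrite teeth_right by exact Hx.
  rewrite Rmax_right; [lra|apply Htail_ge0].
Qed.

Lemma profile_on_step i x : (i < N)%nat -> node i <= x <= node (S i) ->
  profile x = - g + tooth L mu (node i) (step i) x.
Proof.
  intros Hi Hx.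
  assert (Hother : forall j, (j < N)%nat -> j <> i -> tooth L mu (node j) (step j) x = 0).
  { intros j Hj Hji; apply (tooth_out L mu HL Hmu).
    destruct (Nat.lt_ge_cases j i) as [Hlt|Hge]; [right|left].
    - pose proof (node_le (S j) i ltac:(lia)); rewrite node_S in *; lra.
    - pose proof (node_le (S i) j ltac:(lia)); lra. }
  assert (Hteeth : max_lt (fun j => tooth L mu (node j) (step j) x) N
                   = tooth L mu (node i) (step i) x).
  { apply Rle_antisym; [|exact (le_max_lt (fun j => _) N i Hi)].
    apply max_lt_le; [apply tooth_ge0|]; intros j Hj.
    destruct (Nat.eq_dec j i) as [->|Hji]; [lra|].
    rewrite Hother by assumption; apply tooth_ge0. }
  unfold profile; rewrite Hteeth, Htail_left.
  - rewrite Rmax_left; [lra|apply tooth_ge0].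
  - pose proof (node_le (S i) N ltac:(lia)); lra.
Qed.

Lemma profile_node i : (i <= N)%nat -> profile (node i) = - g.
Proof.
  intros Hi; destruct (Nat.eq_dec i N) as [->|HiN].
  - rewrite profile_right, Htail_left; lra.
  - pose proof (step_pos i ltac:(lia)).
    rewrite (profile_on_step i), (tooth_out L mu HL Hmu); rewrite ?node_S; lra || lia.
Qed.

Lemma profile_le0 : (forall x, tail x <= g) -> forall x, profile x <= 0.
Proof.
  intros Htail_le x; unfold profile.
  assert (max_lt (fun i => tooth L mu (node i) (step i) x) N <= g).
  { apply max_lt_le; [lra|]; intros i Hi.
    apply Rle_trans with (L * step i); [apply (tooth_le L mu HL Hmu); left; apply step_pos, Hi|].
    specialize (Hh i Hi); unfold step.
    replace (L * (h i * g / L)) with (h i * g) by (field; lra); nra. }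
  specialize (Htail_le x); unfold Rmax; destruct Rle_dec; lra.
Qed.

Section Descent.

Variable f : R -> R.
Hypothesis Hf : forall x, is_derive f x (profile x).

Lemma decrease_on_step i : (i < N)%nat ->
  f (node (S i)) - f (node i) = - (g ^ 2 / (2 * L)) * pfun (h i) (mu / L).
Proof.
  intros Hi; pose proof (step_pos i Hi).
  rewrite node_S, (increment_on_tooth L mu HL Hmu f profile (node i) (step i) (- g)); auto.
  - rewrite (pfun_eq L mu HL Hmu); unfold step; field; lra.
  - lra.
  - intros x Hx; apply profile_on_step; rewrite ?node_S; lra || lia.
Qed.

Lemma decrease_on_nodes k : (k <= N)%nat ->
  f (node k) - f (node 0) = - (g ^ 2 / (2 * L)) * sum_lt (fun i => pfun (h i) (mu / L)) k.
Proof.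
  induction k as [|k IH]; intros Hk; simpl sum_lt; [ring|].
  rewrite Rmult_plus_distr_l, <- decrease_on_step, <- IH by lia; ring.
Qed.

Lemma gd_iter_node i : (i <= N)%nat -> gd_iter f L h 0 i = node i.
Proof.
  induction i as [|i IH]; intros Hi; [reflexivity|]; simpl.
  rewrite IH, (is_derive_unique _ _ _ (Hf _)), profile_node by lia.
  rewrite node_S; unfold step; field; lra.
Qed.

Lemma min_upto_gd_iter : min_upto (fun i => Derive f (gd_iter f L h 0 i) ^ 2) N = g ^ 2.
Proof.
  apply min_upto_const; intros i Hi.
  rewrite gd_iter_node, (is_derive_unique _ _ _ (Hf _)), profile_node by exact Hi; ring.
Qed.

End Descent.

Definition potential (x : R) : R := RInt profile 0 x.

Lemma is_derive_potential x : is_derive potential x (profile x).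
Proof.
  apply is_derive_RInt0; intros z.
  apply (slope_bounded_continuous mu L); [lra|apply slope_bounded_profile].
Qed.

Lemma potential_descent :
  F_class mu L potential /\
  gd_iter potential L h 0 N = node N /\
  potential 0 - potential (node N) = g ^ 2 / (2 * L) * sum_lt (fun i => pfun (h i) (mu / L)) N /\
  min_upto (fun i => Derive potential (gd_iter potential L h 0 i) ^ 2) N = g ^ 2.
Proof.
  split; [|split; [|split]].
  - apply (F_class_of_slope_bounded_derive _ _ _ profile is_derive_potential).
    apply slope_bounded_profile.
  - apply gd_iter_node; [exact is_derive_potential | lia].
  - pose proof (decrease_on_nodes potential is_derive_potential N (le_n N)) as E.
    change (node 0) with 0 in E; lra.
  - apply min_upto_gd_iter, is_derive_potential.
Qed.

End Profile.

Lemma exists_level L Delta K : 0 < L -> 0 < Delta -> 0 < K ->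
  exists g, 0 < g /\ g ^ 2 = 2 * L * Delta / K /\ g ^ 2 / (2 * L) * K = Delta.
Proof.
  intros HL HD HK; assert (Hq : 0 < 2 * L * Delta / K) by (apply Rdiv_lt_0_compat; nra).
  exists (sqrt (2 * L * Delta / K)); rewrite pow2_sqrt by lra.
  split; [apply sqrt_lt_R0, Hq|split; [reflexivity|field; lra]].
Qed.

Section WorstCase.

Variables (L mu Delta : R) (N : nat) (h : nat -> R).
Hypotheses (HL : 0 < L) (Hmu : mu <= 0) (HN : (1 <= N)%nat)
  (Hh : forall i, (i < N)%nat -> 0 < h i <= 1) (HDelta : 0 < Delta).

Let S := sum_lt (fun i => pfun (h i) (mu / L)) N.

Lemma pfun_sum_pos : 0 < S.
Proof.
  apply sum_lt_pos; [exact HN|]; intros i Hi; specialize (Hh i Hi).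
  rewrite (pfun_eq L mu HL Hmu); pose proof (rise_fraction_bounds L mu HL Hmu); nra.
Qed.

Lemma worst_case_decrease :
  exists (f : R -> R) (x0 : R),
    F_class mu L f /\
    f x0 - f (gd_iter f L h x0 N) = Delta /\
    min_upto (fun i => (Derive f (gd_iter f L h x0 i)) ^ 2) N = 2 * L * Delta / S.
Proof.
  destruct (exists_level L Delta S HL HDelta pfun_sum_pos) as [g [Hg [Hg2 Hlevel]]].
  destruct (potential_descent L mu g h N (fun _ => 0) HL Hmu Hg Hh
              (slope_bounded_const mu L 0 ltac:(lra)) (fun _ => Rle_refl 0) (fun _ _ => eq_refl))
    as [HF [Hnode [Hdec Hmin]]].
  exists (potential L mu g h N (fun _ => 0)), 0.
  split; [exact HF|split].
  - rewrite Hnode, Hdec; exact Hlevel.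
  - rewrite Hmin; exact Hg2.
Qed.

Lemma worst_case_gap :
  exists (f : R -> R) (x0 xstar : R),
    F_class mu L f /\
    (forall y, f xstar <= f y) /\
    f x0 - f xstar = Delta /\
    min_upto (fun i => (Derive f (gd_iter f L h x0 i)) ^ 2) N = 2 * L * Delta / (1 + S).
Proof.
  assert (HS : 0 < 1 + S) by (pose proof pfun_sum_pos; lra).
  destruct (exists_level L Delta (1 + S) HL HDelta HS) as [g [Hg [Hg2 Hlevel]]].
  set (P := node L g h N); set (tail := ramp L g P).
  assert (Htail : slope_bounded mu L tail) by exact (slope_bounded_ramp L g P HL mu Hmu).
  assert (Htail_ge0 : forall x, 0 <= tail x)
    by (intros x; exact (proj1 (ramp_bounds L g P Hg x))).
  assert (Htail_left : forall x, x <= P -> tail x = 0)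
    by (intros; apply (ramp_left L g P HL Hg); lra).
  destruct (potential_descent L mu g h N tail HL Hmu Hg Hh Htail Htail_ge0 Htail_left)
    as [HF [Hnode [Hdec Hmin]]].
  set (f := potential L mu g h N tail) in *.
  pose proof (is_derive_potential L mu g h N tail HL Hmu Htail) as Hf.
  assert (Hprofile_right : forall x, P <= x -> profile L mu g h N tail x = - g + tail x)
    by (intros; apply profile_right; auto).
  assert (Hgl : 0 < g / L) by (apply Rdiv_lt_0_compat; lra).
  assert (Hramp : f (P + g / L) - f P = - (g ^ 2 / (2 * L))).
  { rewrite (increment_of_affine_derive f _ P (P + g / L) (- g) L P Hf); [field; lra|lra|].
    intros x Hx; rewrite Hprofile_right, (ramp_rise L g P HL Hg) by lra; ring. }
  exists f, 0, (P + g / L); split; [exact HF|split; [|split]].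
  - apply (derive_sign_global_min f _ (P + g / L) Hf).
    + intros x _; apply (profile_le0 L mu g h N tail HL Hmu Hg Hh).
      intros z; exact (proj2 (ramp_bounds L g P Hg z)).
    + intros x Hx; rewrite Hprofile_right, (ramp_top L g P HL Hg) by lra; lra.
  - rewrite <- Hlevel, Rmult_plus_distr_l, Rmult_1_r; unfold S, P in *; lra.
  - rewrite Hmin; exact Hg2.
Qed.

End WorstCase.

Theorem proposition4p3 (L mu Delta : R) (N : nat) (h : nat -> R) :
  0 < L -> mu <= 0 -> (1 <= N)%nat ->
  (forall i, (i < N)%nat -> 0 < h i <= 1) ->
  0 < Delta ->
  let kappa := mu / L in
  (exists (f : R -> R) (x0 : R),
      F_class mu L f /\
      f x0 - f (gd_iter f L h x0 N) = Delta /\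
      min_upto (fun i => (Derive f (gd_iter f L h x0 i)) ^ 2) N =
        2 * L * Delta / sum_lt (fun i => pfun (h i) kappa) N) /\
  (exists (f : R -> R) (x0 xstar : R),
      F_class mu L f /\
      (forall y, f xstar <= f y) /\
      f x0 - f xstar = Delta /\
      min_upto (fun i => (Derive f (gd_iter f L h x0 i)) ^ 2) N =
        2 * L * Delta / (1 + sum_lt (fun i => pfun (h i) kappa) N)).
Proof.
  intros HL Hmu HN Hh HDelta kappa; split.
  - exact (worst_case_decrease L mu Delta N h HL Hmu HN Hh HDelta).
  - exact (worst_case_gap L mu Delta N h HL Hmu HN Hh HDelta).
Qed.
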